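(* Let $0<\lambda<1$, let $c>0$, and let $A \subseteq \mathbb{N}$. Suppose that $$\sum_{a \in A[x]} w(a) \sim \exp(c x^{1-\lambda}).$$ Then $$\liminf_{x \to \infty} \frac{\pi_A(x + x^\lambda) - \pi_A(x)}{x^\lambda/\log(x)} \ge \frac{1 - \exp[c(\lambda-1)]}{c(1-\lambda)}.$$
   Context: Fix $0<\lambda<1$. For $c>0$ and $x>0$, define $w(x) = \frac{c(1-\lambda)\log(x)\exp(c x^{1-\lambda})}{x^\lambda}$. Here $\mathbb{N} = \{1,2,3,\dots\}$. For $A \subseteq \mathbb{N}$ and $x\in\mathbb{R}$, write $A[x] = \{a \in A : a \le x\}$ and $\pi_A(x) = \# A[x]$. $f\sim g$ means $f(x)/g(x)\to 1$ as $x\to\infty$. *)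

From Stdlib Require Import Reals Lra ZArith List.
From Coquelicot Require Import Coquelicot.
Open Scope R_scope.

Definition w (lam c x : R) : R :=
  c * (1 - lam) * ln x * exp (c * Rpower x (1 - lam)) / Rpower x lam.

(* A subset A of N = {1,2,3,...} is given by its characteristic function on
   nat; only values at n >= 1 are ever consulted. *)

(* The indices 1, ..., N(x) where N(x) = Z.to_nat (up x) >= every a <= x. *)
Definition idx (x : R) : list nat := seq 1 (Z.to_nat (up x)).

(* sum_{a in A[x]} f(a),  A[x] = {a in A : a <= x} *)
Definition sum_upto (A : nat -> bool) (f : R -> R) (x : R) : R :=
  fold_right Rplus 0
    (map (fun n => if A n then (if Rle_dec (INR n) x then f (INR n) else 0) else 0)
         (idx x)).

Definition pi_A (A : nat -> bool) (x : R) : R := sum_upto A (fun _ => 1) x.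

Definition asymp (f g : R -> R) : Prop :=
  is_lim (fun x => f x / g x) p_infty 1.

Definition liminf_infty (f : R -> R) : Rbar :=
  Lub_Rbar (fun y => exists M : R, y = Glb_Rbar (fun z => exists x, M <= x /\ z = f x)).

(* Put k = c(1-λ), E(t) = exp(c t^(1-λ)), S(t) = Σ_{a ∈ A[t]} w(a)
   and, for x ≥ 2, y = x + x^λ.
   - Every a with x < a ≤ y has w(a) ≤ k ln y E(y) / x^λ, hence
       S(y) - S(x) ≤ (k ln y E(y) / x^λ) (π_A(y) - π_A(x)).
   - By ln(1+u) ≥ u/(1+u), y^(1-λ) - x^(1-λ) ≥ (1-λ)/(1 + x^(λ-1)), hence
       E(x)/E(y) ≤ q(x) := exp(-k/(1 + x^(λ-1))).
   Dividing the first estimate by E(y) gives the pointwise bound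
     (π_A(y) - π_A(x)) / (x^λ/ln x) ≥ g(x) := (R(y) - R(x) q(x)) (ln x/ln y) / k,
   where R = S/E → 1 by hypothesis.  Since x^(λ-1) → 0 and ln x/ln y → 1,
   g(x) → (1 - e^(-k))/k, and a function eventually above a function with
   limit l has liminf at least l. *)

From Stdlib Require Import Reals Lra Lia List ZArith.
From Coquelicot Require Import Coquelicot.
Open Scope R_scope.

(** * Finite sums over A[x] *)

Definition sum_term (A : nat -> bool) (f : R -> R) (x : R) (n : nat) : R :=
  if A n then (if Rle_dec (INR n) x then f (INR n) else 0) else 0.

Lemma fold_map_zero (l : list nat) (F : nat -> R) :
  (forall n, In n l -> F n = 0) -> fold_right Rplus 0 (map F l) = 0.
Proof.
  induction l as [|a l IH]; simpl; intros H; [reflexivity|].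
  rewrite H, IH by auto. ring.
Qed.

Lemma fold_map_nonneg (l : list nat) (F : nat -> R) :
  (forall n, In n l -> 0 <= F n) -> 0 <= fold_right Rplus 0 (map F l).
Proof.
  induction l as [|a l IH]; simpl; intros H; [lra|].
  assert (0 <= F a) by auto.
  assert (0 <= fold_right Rplus 0 (map F l)) by (apply IH; auto).
  lra.
Qed.

Lemma fold_map_diff_le (l : list nat) (F1 F2 G1 G2 : nat -> R) (M : R) :
  (forall n, F1 n - F2 n <= M * (G1 n - G2 n)) ->
  fold_right Rplus 0 (map F1 l) - fold_right Rplus 0 (map F2 l)
  <= M * (fold_right Rplus 0 (map G1 l) - fold_right Rplus 0 (map G2 l)).
Proof.
  intros H; induction l as [|a l IH]; simpl; [lra|].
  specialize (H a). nra.
Qed.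

Lemma up_le_INR (x : R) : IZR (up x) <= INR (Z.to_nat (up x)).
Proof. rewrite INR_IZR_INZ. apply IZR_le. lia. Qed.

Lemma up_le_up (x y : R) : x <= y -> (up x <= up y)%Z.
Proof.
  intros Hxy. destruct (archimed x), (archimed y).
  assert (IZR (up x) < IZR (up y + 1)) by (rewrite plus_IZR; lra).
  apply lt_IZR in H3. lia.
Qed.

Lemma sum_upto_range (A : nat -> bool) (f : R -> R) (x : R) (K : nat) :
  (Z.to_nat (up x) <= K)%nat ->
  sum_upto A f x = fold_right Rplus 0 (map (sum_term A f x) (seq 1 K)).
Proof.
  intros HK. unfold sum_upto, idx.
  set (N := Z.to_nat (up x)) in *.
  replace K with (N + (K - N))%nat by lia.
  rewrite seq_app, map_app, fold_right_app, (fold_map_zero (seq (1 + N) (K - N)));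
    [reflexivity|].
  intros n Hn. apply in_seq in Hn.
  unfold sum_term. destruct (A n); [|reflexivity].
  destruct (Rle_dec (INR n) x) as [Hle|]; [exfalso|reflexivity].
  assert (HN : INR (N + 1) <= INR n) by (apply le_INR; lia).
  rewrite plus_INR in HN. simpl in HN.
  pose proof (up_le_INR x). destruct (archimed x). fold N in H. lra.
Qed.

Lemma sum_upto_increment_le (A : nat -> bool) (f : R -> R) (x y M : R) :
  x <= y ->
  (forall n : nat, x < INR n -> INR n <= y -> f (INR n) <= M) ->
  sum_upto A f y - sum_upto A f x <= M * (pi_A A y - pi_A A x).
Proof.
  intros Hxy Hf. unfold pi_A.
  set (K := Z.to_nat (up y)).
  assert (HxK : (Z.to_nat (up x) <= K)%nat) by (pose proof (up_le_up x y Hxy); lia).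
  rewrite (sum_upto_range A f y K), (sum_upto_range A f x K),
    (sum_upto_range A (fun _ => 1) y K), (sum_upto_range A (fun _ => 1) x K)
    by (unfold K; lia).
  apply fold_map_diff_le. intros n. unfold sum_term.
  destruct (A n); [|lra].
  destruct (Rle_dec (INR n) y), (Rle_dec (INR n) x); try lra.
  assert (f (INR n) <= M) by (apply Hf; lra). lra.
Qed.

Lemma sum_upto_nonneg (A : nat -> bool) (f : R -> R) (x : R) :
  (forall n : nat, (1 <= n)%nat -> 0 <= f (INR n)) -> 0 <= sum_upto A f x.
Proof.
  intros Hf. apply fold_map_nonneg. intros n Hn.
  unfold idx in Hn. apply in_seq in Hn.
  destruct (A n); [|lra]. destruct (Rle_dec (INR n) x); [|lra].
  apply Hf; lia.
Qed.

Lemma Rpower_pos (x a : R) : 0 < Rpower x a.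
Proof. apply exp_pos. Qed.

Lemma exp_le_exp (a b : R) : a <= b -> exp a <= exp b.
Proof. intros [H|H]; [left; apply exp_increasing; auto | subst; lra]. Qed.

Lemma ln_nonneg (t : R) : 1 <= t -> 0 <= ln t.
Proof. intros Ht. rewrite <- ln_1. apply ln_le; lra. Qed.

(* Lower bound for the logarithm, from exp(v) ≥ 1 + v at v = ln(1/(1+u)). *)
Lemma ln_1p_lower (u : R) : -1 < u -> u / (1 + u) <= ln (1 + u).
Proof.
  intros Hu. pose proof (exp_ineq1_le (ln (/ (1 + u)))) as H.
  rewrite exp_ln, ln_Rinv in H by (try apply Rinv_0_lt_compat; lra).
  replace (u / (1 + u)) with (1 - / (1 + u)) by (field; lra). lra.
Qed.

Lemma Rpower_increment_lower (x u a : R) : 0 < x -> 0 < u -> 0 <= a ->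
  a * Rpower x a * (u / (1 + u)) <= Rpower (x * (1 + u)) a - Rpower x a.
Proof.
  intros Hx Hu Ha.
  rewrite <- Rpower_mult_distr by lra.
  assert (Hexp : 1 + a * ln (1 + u) <= Rpower (1 + u) a) by apply exp_ineq1_le.
  assert (Hln : a * (u / (1 + u)) <= a * ln (1 + u))
    by (apply Rmult_le_compat_l; [lra | apply ln_1p_lower; lra]).
  pose proof (Rpower_pos x a). nra.
Qed.

(* The special case used for the shift y = x + x^λ, where x^(1-λ) x^(λ-1) = 1. *)
Lemma shift_power_gap (lam x : R) : lam < 1 -> 0 < x ->
  (1 - lam) / (1 + Rpower x (lam - 1)) <=
  Rpower (x + Rpower x lam) (1 - lam) - Rpower x (1 - lam).
Proof.
  intros Hlam Hx. set (u := Rpower x (lam - 1)).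
  assert (Hshift : x + Rpower x lam = x * (1 + u)).
  { unfold u. replace lam with (1 + (lam - 1)) at 1 by ring.
    rewrite Rpower_plus, Rpower_1 by lra. ring. }
  assert (Hinv : Rpower x (1 - lam) * u = 1).
  { unfold u. rewrite <- Rpower_plus. replace (1 - lam + (lam - 1)) with 0 by ring.
    apply Rpower_O; lra. }
  assert (Hu : 0 < u) by apply Rpower_pos.
  rewrite Hshift.
  eapply Rle_trans; [| apply Rpower_increment_lower; lra].
  right. replace ((1 - lam) / (1 + u)) with ((1 - lam) * (Rpower x (1 - lam) * u) / (1 + u))
    by (rewrite Hinv; field; lra).
  field. lra.
Qed.

Lemma w_nonneg (lam c t : R) : lam < 1 -> 0 < c -> 1 <= t -> 0 <= w lam c t.
Proof.
  intros Hlam Hc Ht. unfold w.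
  pose proof (ln_nonneg t Ht). pose proof (exp_pos (c * Rpower t (1 - lam))).
  pose proof (Rpower_pos t lam).
  apply Rmult_le_pos; [|left; apply Rinv_0_lt_compat; auto].
  apply Rmult_le_pos; [|lra]. apply Rmult_le_pos; [nra|auto].
Qed.

(* On [x, y] ⊆ [1, ∞), w is bounded by its monotone numerator at y over the
   denominator at x. *)
Lemma w_le (lam c x y t : R) : 0 < lam -> lam < 1 -> 0 < c -> 1 <= x ->
  x <= t -> t <= y ->
  w lam c t <= c * (1 - lam) * ln y * exp (c * Rpower y (1 - lam)) / Rpower x lam.
Proof.
  intros H0 H1 Hc Hx Hxt Hty. unfold w, Rdiv.
  assert (Hk : 0 < c * (1 - lam)) by nra.
  pose proof (ln_nonneg t ltac:(lra)).
  assert (ln t <= ln y) by (apply ln_le; lra).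
  assert (exp (c * Rpower t (1 - lam)) <= exp (c * Rpower y (1 - lam))).
  { apply exp_le_exp, Rmult_le_compat_l; [lra|]. apply Rle_Rpower_l; lra. }
  assert (Rpower x lam <= Rpower t lam) by (apply Rle_Rpower_l; lra).
  pose proof (Rpower_pos x lam). pose proof (Rpower_pos t lam).
  pose proof (exp_pos (c * Rpower t (1 - lam))).
  apply Rmult_le_compat.
  - apply Rmult_le_pos; [apply Rmult_le_pos|]; lra.
  - left; apply Rinv_0_lt_compat; auto.
  - apply Rmult_le_compat; try lra.
    + apply Rmult_le_pos; lra.
    + apply Rmult_le_compat_l; lra.
  - apply Rinv_le_contravar; auto.
Qed.

(** * The pointwise lower bound *)

Section Pointwise.
Variables (lam c : R) (A : nat -> bool).
Hypotheses (H0 : 0 < lam) (H1 : lam < 1) (Hc : 0 < c).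

Definition E (t : R) : R := exp (c * Rpower t (1 - lam)).
Definition S (t : R) : R := sum_upto A (w lam c) t.
(* R(t) = S(t)/E(t), which tends to 1 by hypothesis. *)
Definition ratio (t : R) : R := S t / E t.
(* Upper bound for E(x)/E(x + x^λ). *)
Definition q (x : R) : R := exp (- (c * (1 - lam)) / (1 + Rpower x (lam - 1))).
Definition g (x : R) : R :=
  (ratio (x + Rpower x lam) - ratio x * q x)
  * (ln x / ln (x + Rpower x lam)) / (c * (1 - lam)).

Lemma E_ratio_le (x : R) : 0 < x -> E x / E (x + Rpower x lam) <= q x.
Proof.
  intros Hx. unfold E, q, Rdiv at 1. rewrite <- exp_Ropp, <- exp_plus.
  apply exp_le_exp.
  pose proof (shift_power_gap lam x H1 Hx).
  pose proof (Rpower_pos x (lam - 1)).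
  replace (- (c * (1 - lam)) / (1 + Rpower x (lam - 1)))
    with (- (c * ((1 - lam) / (1 + Rpower x (lam - 1))))) by (field; lra).
  assert (c * ((1 - lam) / (1 + Rpower x (lam - 1)))
          <= c * (Rpower (x + Rpower x lam) (1 - lam) - Rpower x (1 - lam)))
    by (apply Rmult_le_compat_l; lra).
  lra.
Qed.

Lemma S_increment_le (x : R) : 1 <= x ->
  S (x + Rpower x lam) - S x
  <= c * (1 - lam) * ln (x + Rpower x lam) * E (x + Rpower x lam) / Rpower x lam
     * (pi_A A (x + Rpower x lam) - pi_A A x).
Proof.
  intros Hx. pose proof (Rpower_pos x lam).
  apply sum_upto_increment_le; [lra|].
  intros n Hn1 Hn2. apply w_le; lra.
Qed.

Lemma g_le (x : R) : 2 <= x ->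
  g x <= (pi_A A (x + Rpower x lam) - pi_A A x) / (Rpower x lam / ln x).
Proof.
  intros Hx. unfold g.
  set (h := Rpower x lam). set (y := x + h).
  set (D := pi_A A y - pi_A A x). set (k := c * (1 - lam)).
  assert (Hh : 0 < h) by apply Rpower_pos.
  assert (Hk : 0 < k) by (unfold k; nra).
  assert (Hlx : 0 < ln x) by (rewrite <- ln_1; apply ln_increasing; lra).
  assert (Hly : ln x < ln y) by (apply ln_increasing; unfold y; lra).
  assert (HEx : 0 < E x) by apply exp_pos.
  assert (HEy : 0 < E y) by apply exp_pos.
  assert (HSx : 0 <= S x).
  { apply sum_upto_nonneg. intros n Hn. apply le_INR in Hn.
    apply w_nonneg; simpl in Hn; lra. }
  (* Replacing E(x)/E(y) by its upper bound q(x) only lowers g. *)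
  assert (Hq : S x / E y <= ratio x * q x).
  { replace (S x / E y) with (S x / E x * (E x / E y)) by (field; lra).
    apply Rmult_le_compat_l; [apply Rdiv_le_0_compat; lra | apply E_ratio_le; lra]. }
  set (P := ln x / ln y / (k * E y)).
  assert (HP : 0 < P) by (unfold P; apply Rdiv_lt_0_compat;
    [apply Rdiv_lt_0_compat | apply Rmult_lt_0_compat]; lra).
  apply Rle_trans with ((S y - S x) * P).
  - replace ((S y - S x) * P) with ((ratio y - S x / E y) * (ln x / ln y) / k)
      by (unfold ratio, P; field; repeat split; lra).
    unfold Rdiv. apply Rmult_le_compat_r; [left; apply Rinv_0_lt_compat; lra|].
    apply Rmult_le_compat_r; [apply Rdiv_le_0_compat; lra | lra].
  - replace (D / (h / ln x)) with (k * ln y * E y / h * D * P)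
      by (unfold P; field; repeat split; lra).
    apply Rmult_le_compat_r; [lra | apply S_increment_le; lra].
Qed.

End Pointwise.

(** * The limit of g *)

Lemma Rpower_neg_lim (a : R) : a < 0 -> is_lim (fun x => Rpower x a) p_infty 0.
Proof.
  intros Ha. unfold Rpower.
  eapply is_lim_comp; [apply is_lim_exp_m | | exists 0; intros; discriminate].
  replace m_infty with (Rbar_mult a p_infty).
  - apply is_lim_scal_l, is_lim_ln_p.
  - unfold Rbar_mult, Rbar_mult'. destruct (Rle_dec 0 a); [exfalso; lra | reflexivity].
Qed.

Section Limits.
Variables (lam c : R) (A : nat -> bool).
Hypotheses (H1 : lam < 1) (Hc : 0 < c).
Hypothesis Hratio : is_lim (ratio lam c A) p_infty 1.

Lemma shift_lim : is_lim (fun x => x + Rpower x lam) p_infty p_infty.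
Proof.
  apply is_lim_le_p_loc with (fun x => x); [|apply is_lim_id].
  exists 0. intros x _. pose proof (Rpower_pos x lam). lra.
Qed.

Lemma ratio_shift_lim : is_lim (fun x => ratio lam c A (x + Rpower x lam)) p_infty 1.
Proof.
  eapply is_lim_comp; [apply Hratio | apply shift_lim | exists 0; intros; discriminate].
Qed.

Lemma one_plus_power_lim : is_lim (fun x => 1 + Rpower x (lam - 1)) p_infty 1.
Proof.
  replace (Finite 1) with (Finite (1 + 0)) by (f_equal; ring).
  apply (is_lim_plus _ _ p_infty 1 0); [apply is_lim_const | apply Rpower_neg_lim; lra |].
  reflexivity.
Qed.

Lemma q_lim : is_lim (q lam c) p_infty (exp (c * (lam - 1))).
Proof.
  unfold q. replace (c * (lam - 1)) with (- (c * (1 - lam)) / 1) by field.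
  apply is_lim_comp_continuous; [| apply continuous_exp].
  apply (is_lim_div (fun _ => - (c * (1 - lam))) _ p_infty (- (c * (1 - lam))) 1);
    [apply is_lim_const | apply one_plus_power_lim | injection; lra | exact I].
Qed.

(* ln(x + x^λ) = ln x + ln(1 + x^(λ-1)), and ln x → ∞. *)
Lemma log_ratio_lim : is_lim (fun x => ln x / ln (x + Rpower x lam)) p_infty 1.
Proof.
  apply is_lim_ext_loc with (fun x => / (1 + ln (1 + Rpower x (lam - 1)) * / ln x)).
  - exists 1. intros x Hx.
    pose proof (Rpower_pos x (lam - 1)).
    replace (x + Rpower x lam) with (x * (1 + Rpower x (lam - 1))).
    2:{ replace lam with (1 + (lam - 1)) at 2 by ring.
        rewrite Rpower_plus, Rpower_1 by lra. ring. }
    rewrite ln_mult by lra.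
    assert (0 < ln x) by (rewrite <- ln_1; apply ln_increasing; lra).
    assert (0 < ln (1 + Rpower x (lam - 1))) by (rewrite <- ln_1; apply ln_increasing; lra).
    field. lra.
  - replace (Finite 1) with (Rbar_inv (Finite (1 + ln 1 * 0)))
      by (rewrite ln_1; simpl; f_equal; field).
    apply is_lim_inv; [| rewrite ln_1; injection; lra].
    apply (is_lim_plus _ _ p_infty 1 (ln 1 * 0)); [apply is_lim_const | | reflexivity].
    apply (is_lim_mult _ _ p_infty (ln 1) 0); [| | exact I].
    + apply is_lim_comp_continuous; [apply one_plus_power_lim | apply continuous_ln; lra].
    + replace (Finite 0) with (Rbar_inv p_infty) by reflexivity.
      apply is_lim_inv; [apply is_lim_ln_p | discriminate].
Qed.

Lemma g_lim : is_lim (g lam c A) p_infty ((1 - exp (c * (lam - 1))) / (c * (1 - lam))).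
Proof.
  unfold g.
  replace (1 - exp (c * (lam - 1))) with ((1 - 1 * exp (c * (lam - 1))) * 1) by ring.
  apply (is_lim_div _ (fun _ => c * (1 - lam)) p_infty
            ((1 - 1 * exp (c * (lam - 1))) * 1) (c * (1 - lam)));
    [| apply is_lim_const | injection; nra | exact I].
  apply (is_lim_mult _ _ p_infty (1 - 1 * exp (c * (lam - 1))) 1);
    [| apply log_ratio_lim | exact I].
  apply (is_lim_minus _ _ p_infty 1 (1 * exp (c * (lam - 1))));
    [apply ratio_shift_lim | | reflexivity].
  apply (is_lim_mult _ _ p_infty 1 (exp (c * (lam - 1))));
    [apply Hratio | apply q_lim | exact I].
Qed.

End Limits.

(** * Comparison with the liminf *)

Lemma liminf_infty_lower (f : R -> R) (l : R) :
  (forall eps, 0 < eps -> exists M, forall x, M <= x -> l - eps <= f x) ->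
  Rbar_le l (liminf_infty f).
Proof.
  intros H.
  assert (Heps : forall eps, 0 < eps -> Rbar_le (l - eps) (liminf_infty f)).
  { intros eps He. destruct (H eps He) as [M HM].
    set (Z := fun z => exists x, M <= x /\ z = f x).
    destruct (Glb_Rbar_correct Z) as [Hlb Hglb].
    assert (Hlow : Rbar_le (l - eps) (Glb_Rbar Z))
      by (apply Hglb; intros z [x [Hx ->]]; apply HM; auto).
    assert (Hup : Rbar_le (Glb_Rbar Z) (f M)) by (apply Hlb; exists M; split; [lra | auto]).
    destruct (Glb_Rbar Z) as [gz| |] eqn:EG; [| contradiction | contradiction].
    apply Rbar_le_trans with gz; [exact Hlow|].
    apply (proj1 (Lub_Rbar_correct _)). exists M. fold Z. rewrite EG. reflexivity. }
  destruct (liminf_infty f) as [r| |]; simpl.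
  - destruct (Rle_dec l r) as [|Hn]; [auto|].
    specialize (Heps ((l - r) / 2) ltac:(lra)). simpl in Heps. lra.
  - exact I.
  - exact (Heps 1 ltac:(lra)).
Qed.

Lemma liminf_infty_ge_lim (f g : R -> R) (l : R) : is_lim g p_infty l ->
  (exists X, forall x, X <= x -> g x <= f x) -> Rbar_le l (liminf_infty f).
Proof.
  intros Hg [X HX]. apply liminf_infty_lower. intros eps He.
  apply is_lim_spec in Hg. destruct (Hg (mkposreal eps He)) as [M HM].
  exists (Rmax (M + 1) X). intros x Hx.
  pose proof (Rmax_l (M + 1) X). pose proof (Rmax_r (M + 1) X).
  specialize (HM x ltac:(lra)). specialize (HX x ltac:(lra)).
  apply Rabs_def2 in HM. simpl in HM. lra.
Qed.

Theorem mainTheorem5 (lam c : R) (A : nat -> bool) :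
  0 < lam -> lam < 1 -> 0 < c ->
  asymp (fun x => sum_upto A (w lam c) x) (fun x => exp (c * Rpower x (1 - lam))) ->
  Rbar_le (Finite ((1 - exp (c * (lam - 1))) / (c * (1 - lam))))
    (liminf_infty (fun x => (pi_A A (x + Rpower x lam) - pi_A A x)
                             / (Rpower x lam / ln x))).
Proof.
  intros H0 H1 Hc Hasymp.
  apply (liminf_infty_ge_lim _ (g lam c A)).
  - apply g_lim; assumption.
  - exists 2. intros x Hx. apply g_le; assumption.
Qed.
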